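(* Let $G$ be a finite group, $k\ge 1$ an integer, and $A_1,\ldots,A_k\subseteq G$ nonempty subsets such that the multiplication map $A_1\times\cdots\times A_k\to G$, $(a_1,\ldots,a_k)\mapsto a_1\cdots a_k$, is a bijection. For a subset $A\subseteq G$ write $A^{-1}A=\{g^{-1}h: g,h\in A\}$ and $AA^{-1}=\{gh^{-1}: g,h\in A\}$. Then: (i) $\mathrm{card}(A_1)$ divides the order of the subgroup of $G$ generated by $A_1^{-1}A_1$; this subgroup equals the subgroup generated by $g^{-1}A_1$ for any $g\in A_1$. Moreover, the order of this subgroup equals the order of the subgroup generated by $A_1A_1^{-1}$, which equals the subgroup generated by $A_1g^{-1}$ for any $g\in A_1$. (ii) $\mathrm{card}(A_k)$ divides the order of the subgroup of $G$ generated by $A_kA_k^{-1}$; this subgroup equals the subgroup generated by $A_kg^{-1}$ for any $g\in A_k$. Moreover, the order of this subgroup equals the order of the subgroup generated by $A_k^{-1}A_k$, which equals the subgroup generated by $g^{-1}A_k$ for any $g\in A_k$. (iii) For each $i$ with $1<i<k$, $\mathrm{card}(A_i)$ divides the order of the normal subgroup of $G$ generated by $A_i^{-1}A_i$; this normal subgroup equals the normal subgroup generated by $g^{-1}A_i$ for any $g\in A_i$, and also equals the normal subgroup generated by $A_iA_i^{-1}$, and the normal subgroup generated by $A_ig^{-1}$ for any $g\in A_i$. *)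

From mathcomp Require Import all_boot all_order all_fingroup.
Set Implicit Arguments. Unset Strict Implicit. Unset Printing Implicit Defensive.
Local Open Scope group_scope.

Definition mul_bij (gT : finGroupType) (k : nat) (A : 'I_k -> {set gT}) : Prop :=
  forall g : gT, exists! f : {ffun 'I_k -> gT},
    (forall i, f i \in A i) /\ \prod_(i < k) f i = g.

Definition normal_closure (gT : finGroupType) (A : {set gT}) : {set gT} :=
  << class_support A [set: gT] >>.

From mathcomp Require Import all_boot all_order all_fingroup.
Set Implicit Arguments. Unset Strict Implicit. Unset Printing Implicit Defensive.
Local Open Scope group_scope.

(* Fix an index i and split every product a_1 ... a_k as b a_i c, where b is the
   product of the factors before a_i and c that of the factors after it. The
   bijectivity of the multiplication map makes (b, a_i, c) |-> b a_i c a
   bijection B x A_i x C -> G, so any S such that membership of b a c in S does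
   not depend on a is in bijection with A_i x Q for some Q, and #|A_i| divides
   #|S|. For the first factor (B = 1) take S = g <<A_i^-1 A_i>> with g in A_i,
   since g^-1 a lies in that subgroup; the last factor is symmetric; for a
   middle factor take S the normal closure N of A_i^-1 A_i, which works because
   b a c = (b g c) (g^-1 a)^c and (g^-1 a)^c lies in N. The remaining identities
   hold for every nonempty set X and g in X: the subgroups generated by X^-1 X
   and g^-1 X coincide, as do those generated by X X^-1 and X g^-1, and X g^-1
   is the conjugate of g^-1 X by g^-1. *)

Section Generation.

Variable gT : finGroupType.
Implicit Types (X : {set gT}) (g x : gT).

Lemma lcosetJ x X : (x *: X) :^ x = X :* x.
Proof. by rewrite conjsgE mulgA lcosetK. Qed.

Lemma gen_mulVs X g : g \in X -> <<X^-1 * X>> = <<g^-1 *: X>>.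
Proof.
move=> Xg; apply/eqP; rewrite eqEsubset !gen_subG; apply/andP; split.
  apply/subsetP=> _ /mulsgP[u v Xu Xv ->]; rewrite mem_invg in Xu.
  have -> : u * v = (g^-1 * u^-1)^-1 * (g^-1 * v).
    by rewrite invMg !invgK -mulgA mulKVg.
  by rewrite groupM ?groupV ?mem_gen // mem_lcoset invgK mulKVg.
apply/subsetP=> _ /lcosetP[x Xx ->].
by rewrite mem_gen // mem_mulg // mem_invg invgK.
Qed.

Lemma gen_mulsV X g : g \in X -> <<X * X^-1>> = <<X :* g^-1>>.
Proof.
move=> Xg; rewrite -{1}(invgK X) (gen_mulVs (_ : g^-1 \in X^-1)) ?memV_invg ?invgK //.
by rewrite -genV invMg invg_set1 invgK.
Qed.

Lemma card_gen_mulVs X : X != set0 -> #|<<X^-1 * X>>| = #|<<X * X^-1>>|.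
Proof.
case/set0Pn=> g Xg; rewrite (gen_mulVs Xg) (gen_mulsV Xg).
by rewrite -lcosetJ genJ cardJg.
Qed.

End Generation.

Lemma group_set_normal_closure (gT : finGroupType) (X : {set gT}) :
  group_set (normal_closure X).
Proof. exact: groupP. Qed.

Canonical normal_closure_group (gT : finGroupType) (X : {set gT}) :=
  group (group_set_normal_closure X).

Section NormalClosure.

Variable gT : finGroupType.
Implicit Types (X : {set gT}) (g x : gT).

Lemma sub_normal_closure X : X \subset normal_closure X.
Proof. exact: subset_trans (sub_class_support _ _) (subset_gen _). Qed.

Lemma normal_closure_norm X : [set: gT] \subset 'N(normal_closure X).
Proof. exact: subset_trans (class_support_norm _ _) (norm_gen _). Qed.

Lemma normal_closure_min X (N : {group gT}) :
  X \subset N -> [set: gT] \subset 'N(N) -> normal_closure X \subset N.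
Proof. by move=> sXN nNG; rewrite /normal_closure gen_subG class_support_sub_norm. Qed.

Lemma normal_closure_gen X : normal_closure <<X>> = normal_closure X.
Proof.
apply/eqP; rewrite eqEsubset !normal_closure_min ?normal_closure_norm //.
  exact: subset_trans (subset_gen X) (sub_normal_closure _).
by rewrite gen_subG sub_normal_closure.
Qed.

Lemma normal_closureJ X x : normal_closure (X :^ x) = normal_closure X.
Proof. by rewrite /normal_closure class_supportGidl ?inE. Qed.

Lemma normal_closure_lrcoset x X : normal_closure (x *: X) = normal_closure (X :* x).
Proof. by rewrite -(normal_closureJ _ x) lcosetJ. Qed.

Lemma normal_closure_mulVs X g :
  g \in X -> normal_closure (X^-1 * X) = normal_closure (g^-1 *: X).
Proof. by move=> Xg; rewrite -normal_closure_gen (gen_mulVs Xg) normal_closure_gen. Qed.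

Lemma normal_closure_mulsV X g :
  g \in X -> normal_closure (X * X^-1) = normal_closure (X :* g^-1).
Proof. by move=> Xg; rewrite -normal_closure_gen (gen_mulsV Xg) normal_closure_gen. Qed.

Lemma normal_closure_mulVs_mulsV X :
  X != set0 -> normal_closure (X^-1 * X) = normal_closure (X * X^-1).
Proof.
case/set0Pn=> g Xg.
by rewrite (normal_closure_mulVs Xg) (normal_closure_mulsV Xg) normal_closure_lrcoset.
Qed.

End NormalClosure.

Section ExactFactorization.

Variable gT : finGroupType.
Implicit Types B A C S : {set gT}.

Definition mul3 (t : gT * gT * gT) := t.1.1 * t.1.2 * t.2.

Definition exact_factorization B A C :=
  {in setX (setX B A) C &, injective mul3} /\ mul3 @: setX (setX B A) C = [set: gT].

Lemma card_exact_factorization_pred B A C S (P : gT -> gT -> bool) :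
  exact_factorization B A C ->
  (forall b a c, b \in B -> a \in A -> c \in C -> (b * a * c \in S) = P b c) ->
  #|S| = (#|A| * #|[set bc in setX B C | P bc.1 bc.2]|)%N.
Proof.
case=> inj3 onto memS; set D := setX (setX B A) C; set Q := [set bc in _ | _].
set T := [set t in D | P t.1.1 t.2].
have sTD : {subset T <= D} by move=> t; rewrite inE => /andP[].
have -> : S = mul3 @: T.
  apply/setP=> x; apply/idP/imsetP => [|[t]].
    have /imsetP[[[b a] c] Dt ->] : x \in mul3 @: D by rewrite onto inE.
    move: Dt; rewrite !inE /mul3 /= => /andP[/andP[Bb Aa] Cc] Sbac.
    by exists (b, a, c); rewrite // !inE Bb Aa Cc -(memS b a c).
  rewrite !inE => /andP[] /andP[] /andP[Bb Aa] Cc Pbc ->.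
  by rewrite /mul3 memS.
rewrite card_in_imset; last by move=> t u /sTD Dt /sTD Du; apply: inj3.
have -> : T = [set (bc.2.1, bc.1, bc.2.2) | bc in setX A Q].
  apply/setP=> [[[b a] c]]; apply/idP/imsetP => [|[[a' [b' c']]]].
    rewrite !inE /= => /andP[/andP[/andP[Bb Aa] Cc] Pbc].
    by exists (a, (b, c)); rewrite // !inE /= Aa Bb Cc.
  rewrite !inE /= => /andP[Aa /andP[/andP[Bb Cc] Pbc]] [-> -> ->].
  by rewrite Bb Aa Cc Pbc.
by rewrite card_in_imset ?cardsX // => -[a [b c]] [a' [b' c']] _ _ [-> -> ->].
Qed.

Lemma dvdn_card_exact_factorization_pred B A C S (P : gT -> gT -> bool) :
  exact_factorization B A C ->
  (forall b a c, b \in B -> a \in A -> c \in C -> (b * a * c \in S) = P b c) ->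
  (#|A| %| #|S|)%N.
Proof.
by move=> fBAC memS; rewrite (card_exact_factorization_pred fBAC memS) dvdn_mulr.
Qed.

Lemma dvdn_card_gen_mulVs B A C :
  exact_factorization B A C -> B \subset [1] -> A != set0 ->
  (#|A| %| #|<<A^-1 * A>>|)%N.
Proof.
move=> fBAC sB1 /set0Pn[g Ag]; rewrite -(card_lcoset <<A^-1 * A>> g).
apply: (dvdn_card_exact_factorization_pred (P := fun _ c => c \in <<A^-1 * A>>) fBAC).
move=> b a c /(subsetP sB1)/set1P-> Aa _.
by rewrite mul1g mem_lcoset mulgA groupMl // mem_gen // mem_mulg // mem_invg invgK.
Qed.

Lemma dvdn_card_gen_mulsV B A C :
  exact_factorization B A C -> C \subset [1] -> A != set0 ->
  (#|A| %| #|<<A * A^-1>>|)%N.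
Proof.
move=> fBAC sC1 /set0Pn[g Ag]; rewrite -(card_rcoset <<A * A^-1>> g).
apply: (dvdn_card_exact_factorization_pred (P := fun b _ => b \in <<A * A^-1>>) fBAC).
move=> b a c _ Aa /(subsetP sC1)/set1P->.
by rewrite mulg1 mem_rcoset -mulgA groupMr // mem_gen // mem_mulg // mem_invg invgK.
Qed.

Lemma dvdn_card_normal_closure B A C :
  exact_factorization B A C -> A != set0 ->
  (#|A| %| #|normal_closure (A^-1 * A)%g|)%N.
Proof.
set N := normal_closure _ => fBAC /set0Pn[g Ag].
apply: (dvdn_card_exact_factorization_pred (P := fun b c => b * g * c \in N) fBAC).
move=> b a c _ Aa _.
have N_ga : (g^-1 * a) ^ c \in N.
  rewrite memJ_norm ?(subsetP (normal_closure_norm _)) ?inE //.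
  by rewrite (subsetP (sub_normal_closure _)) // mem_mulg // mem_invg invgK.
have -> : b * a * c = (b * g * c) * (g^-1 * a) ^ c by rewrite conjgE !mulgA !mulgK.
by rewrite groupMr.
Qed.

End ExactFactorization.

Section ProductFactorization.

Variables (gT : finGroupType) (n : nat) (A : 'I_n.+1 -> {set gT}).
Hypothesis hbij : mul_bij A.
Variable i : 'I_n.+1.
Implicit Types f : {ffun 'I_n.+1 -> gT}.

Definition prefix_prod f := \prod_(0 <= j < i) f (inord j).
Definition suffix_prod f := \prod_(i.+1 <= j < n.+1) f (inord j).

Definition prefixes := [set prefix_prod f | f in family A].
Definition suffixes := [set suffix_prod f | f in family A].

Lemma prod_prefix_suffix f : \prod_(j < n.+1) f j = prefix_prod f * f i * suffix_prod f.
Proof.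
rewrite (eq_bigr (fun j : 'I_n.+1 => f (inord j))) => [|j _]; last by rewrite inord_val.
rewrite -(big_mkord xpredT (fun j => f (inord j))).
rewrite (@big_cat_nat _ _ _ i) ?(ltnW (ltn_ord i)) //.
by rewrite (big_ltn (ltn_ord i)) inord_val /= mulgA.
Qed.

Definition splice f1 (a : gT) f2 : {ffun 'I_n.+1 -> gT} :=
  [ffun j : 'I_n.+1 => if (j < i)%N then f1 j else if j == i then a else f2 j].

Lemma splice_family f1 a f2 :
  f1 \in family A -> a \in A i -> f2 \in family A -> splice f1 a f2 \in family A.
Proof.
move=> /familyP f1A Aa /familyP f2A; apply/familyP=> j; rewrite ffunE.
by case: ifP => // _; case: eqP => [->|].
Qed.

Lemma splice_factors f1 a f2 :
  [/\ prefix_prod (splice f1 a f2) = prefix_prod f1, splice f1 a f2 i = a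
    & suffix_prod (splice f1 a f2) = suffix_prod f2].
Proof.
rewrite /splice /prefix_prod /suffix_prod; split.
- apply: eq_big_nat => j /andP[_ lt_ji].
  by rewrite ffunE inordK ?lt_ji // (ltn_trans lt_ji).
- by rewrite ffunE ltnn eqxx.
apply: eq_big_nat => j /andP[lt_ij lt_jn].
rewrite ffunE inordK // ltnNge ltnW //=; case: eqP => // ji.
by move: lt_ij; rewrite -ji inordK ?ltnn.
Qed.

Lemma prod_family_inj f1 f2 : f1 \in family A -> f2 \in family A ->
  \prod_(j < n.+1) f1 j = \prod_(j < n.+1) f2 j -> f1 = f2.
Proof.
move=> /familyP f1A /familyP f2A e12.
have [f [_ uniq_f]] := hbij (\prod_(j < n.+1) f1 j).
by rewrite -(uniq_f f1) ?(uniq_f f2).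
Qed.

Lemma mul_bij_exact_factorization : exact_factorization prefixes (A i) suffixes.
Proof.
split.
  move=> [[b a] c] [[b' a'] c']; rewrite !inE /=.
  move=> /andP[/andP[/imsetP[f1 f1A ->] Aa] /imsetP[f2 f2A ->]].
  move=> /andP[/andP[/imsetP[f1' f1A' ->] Aa'] /imsetP[f2' f2A' ->]] e.
  have e_splice : splice f1 a f2 = splice f1' a' f2'.
    apply: (prod_family_inj (splice_family f1A Aa f2A) (splice_family f1A' Aa' f2A')).
    rewrite !prod_prefix_suffix; have [-> -> ->] := splice_factors f1 a f2.
    by have [-> -> ->] := splice_factors f1' a' f2'; exact: e.
  have /= := congr1 (fun f => (prefix_prod f, f i, suffix_prod f)) e_splice.
  have [-> -> ->] := splice_factors f1 a f2.
  by have [-> -> ->] := splice_factors f1' a' f2'.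
apply/setP=> x; rewrite inE; have [f [[/familyP fA <-] _]] := hbij x.
apply/imsetP; exists (prefix_prod f, f i, suffix_prod f).
  by rewrite !inE /= !imset_f ?(familyP fA).
by rewrite /mul3 prod_prefix_suffix.
Qed.

Lemma prefixes_ord0 : i = 0 :> nat -> prefixes \subset [1].
Proof.
by move=> i0; apply/subsetP=> _ /imsetP[f _ ->]; rewrite /prefix_prod i0 big_geq ?set11.
Qed.

Lemma suffixes_ord_max : i = n :> nat -> suffixes \subset [1].
Proof.
move=> i_n; apply/subsetP=> _ /imsetP[f _ ->].
by rewrite /suffix_prod i_n big_geq ?set11.
Qed.

End ProductFactorization.

Theorem lemma2p1 (gT : finGroupType) (k : nat) (hk : (0 < k)%N)
  (A : 'I_k -> {set gT})
  (hne : forall i, A i != set0)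
  (hbij : mul_bij A) :
  (* (i) first factor *)
  (forall i : 'I_k, nat_of_ord i = 0%N ->
     [/\ (#|A i| %| #|(<<(A i)^-1 * A i>>)%g|)%N,
         (forall g, g \in A i -> (<<(A i)^-1 * A i>>)%g = (<<g^-1 *: A i>>)%g),
         #|(<<(A i)^-1 * A i>>)%g| = #|(<<A i * (A i)^-1>>)%g| &
         (forall g, g \in A i -> (<<A i * (A i)^-1>>)%g = (<<A i :* g^-1>>)%g)])
  /\
  (* (ii) last factor *)
  (forall i : 'I_k, nat_of_ord i = k.-1 ->
     [/\ (#|A i| %| #|(<<A i * (A i)^-1>>)%g|)%N,
         (forall g, g \in A i -> (<<A i * (A i)^-1>>)%g = (<<A i :* g^-1>>)%g),
         #|(<<A i * (A i)^-1>>)%g| = #|(<<(A i)^-1 * A i>>)%g| &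
         (forall g, g \in A i -> (<<(A i)^-1 * A i>>)%g = (<<g^-1 *: A i>>)%g)])
  /\
  (* (iii) middle factors *)
  (forall i : 'I_k, (0 < i < k.-1)%N ->
     [/\ (#|A i| %| #|normal_closure ((A i)^-1 * A i)%g|)%N,
         (forall g, g \in A i ->
            normal_closure ((A i)^-1 * A i)%g = normal_closure (g^-1 *: A i)%g),
         normal_closure ((A i)^-1 * A i)%g = normal_closure (A i * (A i)^-1)%g &
         (forall g, g \in A i ->
            normal_closure ((A i)^-1 * A i)%g = normal_closure (A i :* g^-1)%g)]).
Proof.
case: k hk A hne hbij => // n _ A hne hbij.
have fact i := mul_bij_exact_factorization hbij i.
split; [|split] => i hi.
- split; first exact: dvdn_card_gen_mulVs (fact i) (prefixes_ord0 A hi) (hne i).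
  + by move=> g; apply: gen_mulVs.
  + exact: card_gen_mulVs.
  + by move=> g; apply: gen_mulsV.
- split; first exact: dvdn_card_gen_mulsV (fact i) (suffixes_ord_max A hi) (hne i).
  + by move=> g; apply: gen_mulsV.
  + exact/esym/card_gen_mulVs.
  + by move=> g; apply: gen_mulVs.
split; first exact: dvdn_card_normal_closure (fact i) (hne i).
- by move=> g; apply: normal_closure_mulVs.
- exact: normal_closure_mulVs_mulsV.
by move=> g Ag; rewrite (normal_closure_mulVs Ag) normal_closure_lrcoset.
Qed.
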